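(* Let $(I,<,\mathcal X,R,\mathrm{Mor})$ be a groupoid spine such that $R$ is symmetric and $|I|\ge 3$. Then $(I,<,\mathcal X,R,\mathrm{Mor})$ extends to a groupoid.
   Context: A groupoid spine $(I,<,\mathcal X,R,\mathrm{Mor})$ consists of a linear order $(I,<)$, nonempty sets $\mathcal X=\{X_i:i\in I\}$, a nonempty relation $R\subseteq I^2$ containing all $(i,j)$ with $i<j$, and for each $(i,j)\in R$ a nonempty set $\operatorname{Mor}(i,j)$ of bijections $X_i\to X_j$, such that: if $(i,i)\in R$ then $\mathrm{id}_{X_i}\in\operatorname{Mor}(i,i)$; if $(i,j),(j,i)\in R$ and $f\in\operatorname{Mor}(i,j)$ then $f^{-1}\in\operatorname{Mor}(j,i)$; if $(i,j),(j,k),(i,k)\in R$, $f\in\operatorname{Mor}(i,j)$, $g\in\operatorname{Mor}(j,k)$ then $g\circ f\in\operatorname{Mor}(i,k)$. $R$ is symmetric if $(i,j)\in R$ implies $(j,i)\in R$. The spine extends to a groupoid if one can define $\operatorname{Mor}(i,j)$ for $(i,j)\in I^2\setminus R$ (keeping $\operatorname{Mor}(i,j)$ unchanged for $(i,j)\in R$) so that $(I,<,\mathcal X,I^2,\mathrm{Mor})$ is a groupoid spine. *)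

Definition strict_linear_order {I : Type} (lt : I -> I -> Prop) : Prop :=
  (forall i, ~ lt i i) /\
  (forall i j k, lt i j -> lt j k -> lt i k) /\
  (forall i j, lt i j \/ i = j \/ lt j i).

Definition bijective_fun {A B : Type} (f : A -> B) : Prop :=
  (forall x y, f x = f y -> x = y) /\ (forall y, exists x, f x = y).

(* A groupoid spine (I,<,X,R,Mor).  Mor i j is a set (predicate) of maps
   X i -> X j; it is only meaningful for (i,j) in R. *)
Definition groupoid_spine (I : Type) (lt : I -> I -> Prop) (X : I -> Type)
  (R : I -> I -> Prop) (Mor : forall i j : I, (X i -> X j) -> Prop) : Prop :=
  strict_linear_order lt /\
  (forall i, inhabited (X i)) /\
  (exists i j, R i j) /\
  (forall i j, lt i j -> R i j) /\
  (forall i j, R i j -> exists f, Mor i j f) /\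
  (forall i j, R i j -> forall f, Mor i j f -> bijective_fun f) /\
  (forall i, R i i -> Mor i i (fun x => x)) /\
  (forall i j, R i j -> R j i -> forall f, Mor i j f ->
     exists g, Mor j i g /\ (forall x, g (f x) = x) /\ (forall y, f (g y) = y)) /\
  (forall i j k, R i j -> R j k -> R i k -> forall f g,
     Mor i j f -> Mor j k g -> Mor i k (fun x => g (f x))).

Definition symmetric_rel {I : Type} (R : I -> I -> Prop) : Prop :=
  forall i j, R i j -> R j i.

Definition at_least_three (I : Type) : Prop :=
  exists a b c : I, a <> b /\ a <> c /\ b <> c.

Definition extends_to_groupoid (I : Type) (lt : I -> I -> Prop) (X : I -> Type)
  (R : I -> I -> Prop) (Mor : forall i j : I, (X i -> X j) -> Prop) : Prop :=
  exists Mor' : forall i j : I, (X i -> X j) -> Prop,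
    (forall i j, R i j -> forall f, Mor' i j f <-> Mor i j f) /\
    groupoid_spine I lt X (fun _ _ => True) Mor'.

From Stdlib Require Import Classical FunctionalExtensionality.

(* Since R is symmetric and contains every pair i < j, it contains every pair
   of distinct indices; only diagonal pairs (i,i) may be missing.  Declare
   f : X i -> X j a morphism when it factors as X i -> X c -> X j through
   spine morphisms for every c outside {i,j}.  Composing with a spine morphism
   c -> d and its inverse shows that one such factorization yields all of
   them, so on R these are exactly the old morphisms, and the groupoid axioms
   follow by routing composites through a suitable third object, which exists
   because |I| >= 3.  Identities arise as g^-1 o g. *)

Lemma bijective_fun_comp {A B C : Type} (g : A -> B) (h : B -> C) :
  bijective_fun g -> bijective_fun h -> bijective_fun (fun x => h (g x)).
Proof.
  intros [g_inj g_surj] [h_inj h_surj]; split.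
  - intros x y e; apply g_inj, h_inj, e.
  - intro z; destruct (h_surj z) as [y <-]; destruct (g_surj y) as [x <-].
    now exists x.
Qed.

Lemma at_least_three_exists_third (I : Type) :
  at_least_three I -> forall x y : I, exists c, c <> x /\ c <> y.
Proof.
  intros (a & b & c & ab & ac & bc) x y.
  destruct (classic (a = x \/ a = y)) as [ha|ha]; [|exists a; tauto].
  destruct (classic (b = x \/ b = y)) as [hb|hb]; [|exists b; tauto].
  exists c; split; intros ->; intuition congruence.
Qed.

Lemma symmetric_total_neq {I : Type} (lt R : I -> I -> Prop) :
  strict_linear_order lt -> (forall i j, lt i j -> R i j) -> symmetric_rel R ->
  forall i j, i <> j -> R i j.
Proof.
  intros (_ & _ & total) lt_R R_sym i j ij.
  destruct (total i j) as [h|[h|h]]; [auto|contradiction|auto].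
Qed.

Section OffDiagonalSpine.

Variables (I : Type) (X : I -> Type) (R : I -> I -> Prop)
  (Mor : forall i j : I, (X i -> X j) -> Prop).

Hypothesis R_neq : forall i j, i <> j -> R i j.
Hypothesis exists_third : forall i j : I, exists c, c <> i /\ c <> j.
Hypothesis Mor_nonempty : forall i j, R i j -> exists f, Mor i j f.
Hypothesis Mor_bij : forall i j, R i j -> forall f, Mor i j f -> bijective_fun f.
Hypothesis Mor_inv : forall i j, R i j -> R j i -> forall f, Mor i j f ->
  exists g, Mor j i g /\ (forall x, g (f x) = x) /\ (forall y, f (g y) = y).
Hypothesis Mor_comp : forall i j k, R i j -> R j k -> R i k -> forall f g,
  Mor i j f -> Mor j k g -> Mor i k (fun x => g (f x)).

Lemma Mor_comp_neq i j k f g : i <> j -> j <> k -> i <> k ->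
  Mor i j f -> Mor j k g -> Mor i k (fun x => g (f x)).
Proof. intros; apply (Mor_comp i j k); auto. Qed.

Lemma Mor_inv_neq i j f : i <> j -> Mor i j f ->
  exists g, Mor j i g /\ (forall x, g (f x) = x) /\ (forall y, f (g y) = y).
Proof. intros; apply Mor_inv; auto. Qed.

Definition factors_through (c : I) {i j : I} (f : X i -> X j) : Prop :=
  exists g h, Mor i c g /\ Mor c j h /\ f = (fun x => h (g x)).

Definition Mor_ext (i j : I) (f : X i -> X j) : Prop :=
  forall c, c <> i -> c <> j -> factors_through c f.

Lemma factors_through_change c d i j (f : X i -> X j) :
  c <> i -> c <> j -> d <> i -> d <> j ->
  factors_through c f -> factors_through d f.
Proof.
  intros ci cj di dj (g & h & Mg & Mh & ->).
  destruct (classic (c = d)) as [<-|cd]; [now exists g, h|].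
  destruct (Mor_nonempty c d (R_neq c d cd)) as [p Mp].
  destruct (Mor_inv_neq c d p cd Mp) as (q & Mq & qp & _).
  exists (fun x => p (g x)), (fun y => h (q y)); repeat split.
  - apply (Mor_comp_neq i c d); auto.
  - apply (Mor_comp_neq d c j); auto.
  - apply functional_extensionality; intro x; now rewrite qp.
Qed.

Lemma Mor_ext_intro c i j (f : X i -> X j) :
  c <> i -> c <> j -> factors_through c f -> Mor_ext i j f.
Proof. intros ci cj Hf d di dj; now apply (factors_through_change c). Qed.

Lemma Mor_ext_elim i j (f : X i -> X j) :
  Mor_ext i j f -> exists c, c <> i /\ c <> j /\ factors_through c f.
Proof. intro Hf; destruct (exists_third i j) as (c & ci & cj); exists c; auto. Qed.

Lemma Mor_ext_iff i j (f : X i -> X j) : R i j -> Mor_ext i j f <-> Mor i j f.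
Proof.
  intro Rij; split.
  - intro Hf.
    destruct (Mor_ext_elim i j f Hf) as (c & ci & cj & g & h & Mg & Mh & ->).
    apply (Mor_comp i c j); auto.
  - intros Mf c ci cj.
    destruct (Mor_nonempty i c (R_neq i c (not_eq_sym ci))) as [g Mg].
    destruct (Mor_inv_neq i c g (not_eq_sym ci) Mg) as (g' & Mg' & g'g & _).
    exists g, (fun y => f (g' y)); repeat split; [exact Mg| |].
    + apply (Mor_comp c i j); auto.
    + apply functional_extensionality; intro x; now rewrite g'g.
Qed.

Lemma Mor_comp_ext c j k (h : X c -> X j) (g : X j -> X k) :
  c <> j -> c <> k -> Mor c j h -> Mor_ext j k g -> Mor c k (fun x => g (h x)).
Proof.
  intros cj ck Mh Hg.
  destruct (classic (j = k)) as [<-|jk].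
  - destruct (exists_third c j) as (d & dc & dj).
    destruct (Hg d dj dj) as (g1 & g2 & Mg1 & Mg2 & ->).
    assert (Mg1h : Mor c d (fun x => g1 (h x)))
      by (apply (Mor_comp_neq c j d); auto).
    apply (Mor_comp_neq c d j); auto.
  - apply (Mor_comp_neq c j k); auto.
    now apply Mor_ext_iff; auto.
Qed.

Lemma Mor_ext_nonempty i j : exists f, Mor_ext i j f.
Proof.
  destruct (exists_third i j) as (c & ci & cj).
  destruct (Mor_nonempty i c (R_neq i c (not_eq_sym ci))) as [g Mg].
  destruct (Mor_nonempty c j (R_neq c j cj)) as [h Mh].
  exists (fun x => h (g x)); apply (Mor_ext_intro c); auto.
  now exists g, h.
Qed.

Lemma Mor_ext_bijective i j (f : X i -> X j) : Mor_ext i j f -> bijective_fun f.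
Proof.
  intro Hf; destruct (Mor_ext_elim i j f Hf) as (c & ci & cj & g & h & Mg & Mh & ->).
  apply bijective_fun_comp; [apply (Mor_bij i c)|apply (Mor_bij c j)]; auto.
Qed.

Lemma Mor_ext_id i : Mor_ext i i (fun x => x).
Proof.
  intros c ci _.
  destruct (Mor_nonempty i c (R_neq i c (not_eq_sym ci))) as [g Mg].
  destruct (Mor_inv_neq i c g (not_eq_sym ci) Mg) as (g' & Mg' & g'g & _).
  exists g, g'; repeat split; auto.
  apply functional_extensionality; intro x; now rewrite g'g.
Qed.

Lemma Mor_ext_inv i j (f : X i -> X j) : Mor_ext i j f ->
  exists g, Mor_ext j i g /\ (forall x, g (f x) = x) /\ (forall y, f (g y) = y).
Proof.
  intro Hf; destruct (Mor_ext_elim i j f Hf) as (c & ci & cj & g & h & Mg & Mh & ->).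
  destruct (Mor_inv_neq i c g (not_eq_sym ci) Mg) as (g' & Mg' & g'g & gg').
  destruct (Mor_inv_neq c j h cj Mh) as (h' & Mh' & h'h & hh').
  exists (fun y => g' (h' y)); repeat split.
  - apply (Mor_ext_intro c); auto. now exists h', g'.
  - intro x; now rewrite h'h, g'g.
  - intro y; now rewrite gg', hh'.
Qed.

Lemma Mor_ext_comp i j k (f : X i -> X j) (g : X j -> X k) :
  Mor_ext i j f -> Mor_ext j k g -> Mor_ext i k (fun x => g (f x)).
Proof.
  intros Hf Hg c ci ck.
  destruct (classic (c = j)) as [->|cj].
  - exists f, g; repeat split; apply Mor_ext_iff; auto.
  - destruct (Hf c ci cj) as (f1 & f2 & Mf1 & Mf2 & ->).
    exists f1, (fun y => g (f2 y)); repeat split; auto.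
    now apply (Mor_comp_ext c j k).
Qed.

End OffDiagonalSpine.

Theorem theorem7p5 (I : Type) (lt : I -> I -> Prop) (X : I -> Type)
  (R : I -> I -> Prop) (Mor : forall i j : I, (X i -> X j) -> Prop) :
  groupoid_spine I lt X R Mor ->
  symmetric_rel R ->
  at_least_three I ->
  extends_to_groupoid I lt X R Mor.
Proof.
  intros (lin & X_inh & (i0 & _) & lt_R & nonempty & bij & _ & inv & comp) R_sym three.
  pose proof (symmetric_total_neq lt R lin lt_R R_sym) as R_neq.
  pose proof (at_least_three_exists_third I three) as exists_third.
  exists (Mor_ext I X Mor); split.
  { intros i j Rij f; eapply Mor_ext_iff; eauto. }
  refine (conj lin (conj X_inh (conj _ (conj _ (conj _ (conj _ (conj _ (conj _ _)))))))).
  - now exists i0, i0.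
  - now intros.
  - intros i j _; eapply Mor_ext_nonempty; eauto.
  - intros i j _ f; eapply Mor_ext_bijective; eauto.
  - intros i _; eapply Mor_ext_id; eauto.
  - intros i j _ _ f; eapply Mor_ext_inv; eauto.
  - intros i j k _ _ _ f g; eapply Mor_ext_comp; eauto.
Qed.
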